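(* Under the hypotheses of Theorem 4.8 (exact-data TGSS iteration with $F(z_k)\ne y$ for all $k$, $\lambda_0=0$, $0\le\lambda_k\le1$, coupling condition $\lambda_k(\lambda_k+1)\|x_k-x_{k-1}\|^2\le\frac{\Psi^2}{\mu c_F^2}\|F(z_k)-y\|^2$ for all $k$ with $\tau>\frac{1+\eta}{1-\eta}$, $\mu>1$, $\Psi=(1-\eta)-\tau^{-1}(1+\eta)$, and $\sum_k\lambda_k\|x_k-x_{k-1}\|<\infty$), let $\bar x=\lim_{k\to\infty}z_k$, which is a solution of $F(x)=y$. Then also $x_k\to\bar x$ as $k\to\infty$.
   Context: Setting: $\mathcal X,\mathcal Y$ are real Hilbert spaces, $F:\mathcal D(F)\subset\mathcal X\to\mathcal Y$ is continuously Fréchet differentiable with derivative $F'(x)$ and adjoint $F'(x)^*$; $x_0\in\mathcal X$, $\rho>0$, $B_{4\rho}(x_0)\subset\mathcal D(F)$ (closed ball). Standing assumptions: (A1) $F(x)=y$ has a solution $x_*\in B_\rho(x_0)$; (A2) there is $\eta\in(0,1)$ with $\|F(x)-F(\tilde x)-F'(x)(x-\tilde x)\|\le\eta\|F(x)-F(\tilde x)\|$ for all $x,\tilde x\in B_{4\rho}(x_0)$; (A3) $0<\|F'(x)\|\le c_F$ for all $x\in B_{4\rho}(x_0)$. Notation: $H(u,a,\xi)=\{x:|\langle u,x\rangle-a|\le\xi\}$; $P_C$ is the metric projection onto a nonempty closed convex set $C$. TGSS iteration with exact data: fix an integer $K\ge1$; set $x_{-1}=x_0$. For $k=0,1,2,\dots$: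 $z_k=x_k+\lambda_k(x_k-x_{k-1})$, $r_k=F(z_k)-y$, $u_k=F'(z_k)^*r_k$, $\alpha_k=\langle u_k,z_k\rangle-\|r_k\|^2$, $\xi_k=\eta\|r_k\|^2$, $H_k=H(u_k,\alpha_k,\xi_k)$. Choose a finite index set $I_k\subset\{k-K,\dots,k\}\cap\mathbb N_0$ with $k\in I_k$, written $I_k=\{k_1>\dots>k_s\}$, $k_1=k$; set $p_1=P_{H_{k_1}}(z_k)$, $p_j=P_{H_{k_1}\cap\dots\cap H_{k_j}}(p_{j-1})$ for $j=2,\dots,s$, and $x_{k+1}=p_s$. *)

From Stdlib Require Import Reals Lra List Sorting.Sorted.
Open Scope R_scope.

Record HilbertSpace := {
  hs_car :> Type;
  hs_zero : hs_car;
  hs_add : hs_car -> hs_car -> hs_car;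
  hs_opp : hs_car -> hs_car;
  hs_scal : R -> hs_car -> hs_car;
  hs_inner : hs_car -> hs_car -> R;
  hs_add_assoc : forall a b c, hs_add a (hs_add b c) = hs_add (hs_add a b) c;
  hs_add_comm : forall a b, hs_add a b = hs_add b a;
  hs_add_0 : forall a, hs_add a hs_zero = a;
  hs_add_opp : forall a, hs_add a (hs_opp a) = hs_zero;
  hs_scal_1 : forall a, hs_scal 1 a = a;
  hs_scal_assoc : forall s t a, hs_scal s (hs_scal t a) = hs_scal (s * t) a;
  hs_scal_distr_v : forall s a b, hs_scal s (hs_add a b) = hs_add (hs_scal s a) (hs_scal s b);
  hs_scal_distr_s : forall s t a, hs_scal (s + t) a = hs_add (hs_scal s a) (hs_scal t a);
  hs_inner_sym : forall a b, hs_inner a b = hs_inner b a;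
  hs_inner_add_l : forall a b c, hs_inner (hs_add a b) c = hs_inner a c + hs_inner b c;
  hs_inner_scal_l : forall s a b, hs_inner (hs_scal s a) b = s * hs_inner a b;
  hs_inner_pos : forall a, 0 <= hs_inner a a;
  hs_inner_def : forall a, hs_inner a a = 0 -> a = hs_zero;
  hs_complete : forall u : nat -> hs_car,
    (forall eps, eps > 0 -> exists N, forall m n, (N <= m)%nat -> (N <= n)%nat ->
       sqrt (hs_inner (hs_add (u m) (hs_opp (u n))) (hs_add (u m) (hs_opp (u n)))) < eps) ->
    exists l, forall eps, eps > 0 -> exists N, forall n, (N <= n)%nat ->
       sqrt (hs_inner (hs_add (u n) (hs_opp l)) (hs_add (u n) (hs_opp l))) < eps
}.

Arguments hs_zero {_}.
Arguments hs_add {_} _ _.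
Arguments hs_opp {_} _.
Arguments hs_scal {_} _ _.
Arguments hs_inner {_} _ _.

Definition hsub {H : HilbertSpace} (a b : H) : H := hs_add a (hs_opp b).
Definition hnorm {H : HilbertSpace} (a : H) : R := sqrt (hs_inner a a).

Definition seq_cv {H : HilbertSpace} (u : nat -> H) (l : H) : Prop :=
  forall eps, eps > 0 -> exists N, forall n, (N <= n)%nat -> hnorm (hsub (u n) l) < eps.

Definition cball {H : HilbertSpace} (c : H) (r : R) (v : H) : Prop :=
  hnorm (hsub v c) <= r.

Definition bounded_linear {X Y : HilbertSpace} (A : X -> Y) : Prop :=
  (forall a b, A (hs_add a b) = hs_add (A a) (A b)) /\
  (forall s a, A (hs_scal s a) = hs_scal s (A a)) /\
  (exists c, forall a, hnorm (A a) <= c * hnorm a).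

Definition frechet_deriv_at {X Y : HilbertSpace} (D : X -> Prop) (F : X -> Y)
    (A : X -> Y) (x : X) : Prop :=
  bounded_linear A /\
  forall eps, eps > 0 -> exists delta, delta > 0 /\
    forall h, D (hs_add x h) -> hnorm h < delta ->
      hnorm (hsub (hsub (F (hs_add x h)) (F x)) (A h)) <= eps * hnorm h.

Definition C1_on {X Y : HilbertSpace} (D : X -> Prop) (F : X -> Y)
    (DF : X -> X -> Y) : Prop :=
  (forall x, D x -> frechet_deriv_at D F (DF x) x) /\
  (forall x, D x -> forall eps, eps > 0 -> exists delta, delta > 0 /\
     forall x', D x' -> hnorm (hsub x' x) < delta ->
       forall h, hnorm (hsub (DF x' h) (DF x h)) <= eps * hnorm h).

Definition is_adjoint {X Y : HilbertSpace} (A : X -> Y) (Astar : Y -> X) : Prop :=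
  forall a b, hs_inner (A a) b = hs_inner a (Astar b).

Definition hslab {X : HilbertSpace} (u : X) (a xi : R) (v : X) : Prop :=
  Rabs (hs_inner u v - a) <= xi.

Definition is_proj {X : HilbertSpace} (C : X -> Prop) (v p : X) : Prop :=
  C p /\ forall q, C q -> hnorm (hsub v p) <= hnorm (hsub v q).

Definition tgss_slab {X Y : HilbertSpace} (F : X -> Y) (DFadj : X -> Y -> X)
    (y : Y) (eta : R) (zk : X) : X -> Prop :=
  let r := hsub (F zk) y in
  let u := DFadj zk r in
  let alpha := hs_inner u zk - hnorm r ^ 2 in
  let xi := eta * hnorm r ^ 2 in
  hslab u alpha xi.

(** x_{k-1}, with the convention x_{-1} = x_0. *)
Definition prev {X : HilbertSpace} (x : nat -> X) (k : nat) : X :=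
  match k with O => x O | S k' => x k' end.

(** I_k = [k_1; ...; k_s] with k = k_1 > ... > k_s >= k - K, k_i natural. *)
Definition tgss_indexset (K k : nat) (l : list nat) : Prop :=
  l <> nil /\ nth 0 l 0%nat = k /\
  StronglySorted (fun a b => (b < a)%nat) l /\
  Forall (fun i => (k <= i + K)%nat) l.

(* Since z_k = x_k + lam_k (x_k - x_{k-1}), the triangle inequality gives
   ||x_k - xbar|| <= ||z_k - xbar|| + lam_k ||x_k - x_{k-1}||.  The first term
   tends to 0 because z_k -> xbar, the second because it is the general term of
   a convergent series. *)
From Stdlib Require Import Reals List Lra Lia.
Open Scope R_scope.

Section HilbertGeometry.

Variable X : HilbertSpace.
Implicit Types a b c : X.

Lemma inner_zero_l b : hs_inner hs_zero b = 0.
Proof.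
  pose proof (hs_inner_add_l X b hs_zero b) as E.
  rewrite hs_add_0 in E; lra.
Qed.

Lemma inner_opp_l a b : hs_inner (hs_opp a) b = - hs_inner a b.
Proof.
  pose proof (hs_inner_add_l X a (hs_opp a) b) as E.
  rewrite hs_add_opp, inner_zero_l in E; lra.
Qed.

Lemma inner_add_r a b c : hs_inner c (hs_add a b) = hs_inner c a + hs_inner c b.
Proof. rewrite !(hs_inner_sym X c), hs_inner_add_l; reflexivity. Qed.

Lemma inner_scal_r s a b : hs_inner b (hs_scal s a) = s * hs_inner b a.
Proof. rewrite !(hs_inner_sym X b), hs_inner_scal_l; reflexivity. Qed.

Lemma hnorm_ge0 a : 0 <= hnorm a.
Proof. apply sqrt_pos. Qed.

Lemma hnorm_sqr a : hnorm a * hnorm a = hs_inner a a.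
Proof. apply sqrt_sqrt, hs_inner_pos. Qed.

(* Expanding 0 <= ||<b,b> a - <a,b> b||^2 gives <b,b> (<a,a><b,b> - <a,b>^2) >= 0. *)
Lemma inner_cauchy_schwarz_sqr a b :
  hs_inner a b * hs_inner a b <= hs_inner a a * hs_inner b b.
Proof.
  destruct (Req_dec (hs_inner b b) 0) as [Hb | Hb].
  - apply hs_inner_def in Hb; subst b.
    rewrite (hs_inner_sym X a), !inner_zero_l; lra.
  - assert (Hbpos : 0 < hs_inner b b)
      by (pose proof (hs_inner_pos X b); lra).
    pose proof (hs_inner_pos X (hs_add (hs_scal (hs_inner b b) a)
                                      (hs_scal (- hs_inner a b) b))) as P.
    rewrite !hs_inner_add_l, !inner_add_r, !hs_inner_scal_l, !inner_scal_r,
      (hs_inner_sym X b a) in P.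
    nra.
Qed.

Lemma inner_le_hnorm_mul a b : hs_inner a b <= hnorm a * hnorm b.
Proof.
  pose proof (inner_cauchy_schwarz_sqr a b) as CS.
  rewrite <- (hnorm_sqr a), <- (hnorm_sqr b) in CS.
  assert (Hm : 0 <= hnorm a * hnorm b)
    by (apply Rmult_le_pos; apply hnorm_ge0).
  replace (hnorm a * hnorm a * (hnorm b * hnorm b))
    with ((hnorm a * hnorm b) * (hnorm a * hnorm b)) in CS by ring.
  nra.
Qed.

Lemma hnorm_triangle a b : hnorm (hs_add a b) <= hnorm a + hnorm b.
Proof.
  apply Rsqr_incr_0_var; [| pose proof (hnorm_ge0 a); pose proof (hnorm_ge0 b); lra].
  unfold Rsqr; rewrite hnorm_sqr.
  rewrite hs_inner_add_l, !inner_add_r, (hs_inner_sym X b a).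
  pose proof (inner_le_hnorm_mul a b).
  rewrite <- (hnorm_sqr a), <- (hnorm_sqr b); nra.
Qed.

Lemma hnorm_opp a : hnorm (hs_opp a) = hnorm a.
Proof.
  unfold hnorm; rewrite inner_opp_l, hs_inner_sym, inner_opp_l; f_equal; ring.
Qed.

Lemma hnorm_scal s a : hnorm (hs_scal s a) = Rabs s * hnorm a.
Proof.
  unfold hnorm; rewrite hs_inner_scal_l, inner_scal_r, <- Rmult_assoc.
  rewrite sqrt_mult_alt by (rewrite <- Rsqr_def; apply Rle_0_sqr).
  rewrite <- Rsqr_def, sqrt_Rsqr_abs; reflexivity.
Qed.

Lemma hnorm_le_add_r a b : hnorm a <= hnorm (hs_add a b) + hnorm b.
Proof.
  rewrite <- (hnorm_opp b).
  replace a with (hs_add (hs_add a b) (hs_opp b)) at 1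
    by now rewrite <- hs_add_assoc, hs_add_opp, hs_add_0.
  apply hnorm_triangle.
Qed.

Lemma hsub_add_l a b c : hsub (hs_add a b) c = hs_add (hsub a c) b.
Proof.
  unfold hsub; rewrite <- !hs_add_assoc, (hs_add_comm X b); reflexivity.
Qed.

Lemma seq_cv_hnorm (u : nat -> X) l :
  seq_cv u l -> Un_cv (fun n => hnorm (hsub (u n) l)) 0.
Proof.
  intros Hu eps Heps; destruct (Hu eps Heps) as [N HN]; exists N; intros n Hn.
  unfold Rdist; rewrite Rminus_0_r, Rabs_pos_eq by apply hnorm_ge0.
  apply HN; lia.
Qed.

Lemma seq_cv_of_hnorm_le (u : nat -> X) l (c : nat -> R) :
  (forall n, hnorm (hsub (u n) l) <= c n) -> Un_cv c 0 -> seq_cv u l.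
Proof.
  intros Hle Hc eps Heps; destruct (Hc eps Heps) as [N HN]; exists N; intros n Hn.
  specialize (HN n ltac:(lia)); unfold Rdist in HN; rewrite Rminus_0_r in HN.
  pose proof (Rle_abs (c n)); pose proof (Hle n); lra.
Qed.

End HilbertGeometry.

Lemma series_term_cv0 (u : nat -> R) l : Un_cv (sum_f_R0 u) l -> Un_cv u 0.
Proof.
  intros Hs eps Heps; destruct (Hs (eps / 2) ltac:(lra)) as [N HN].
  exists (S N); intros [|n] Hn; [lia |].
  pose proof (HN (S n) ltac:(lia)) as H1; pose proof (HN n ltac:(lia)) as H2.
  unfold Rdist in *; simpl in H1; rewrite Rminus_0_r.
  apply Rabs_def2 in H1; apply Rabs_def2 in H2; apply Rabs_def1; lra.
Qed.

Theorem corollary4p9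
  (X Y : HilbertSpace) (D : X -> Prop) (F : X -> Y) (DF : X -> X -> Y)
  (DFadj : X -> Y -> X) (y : Y) (x0 : X) (rho eta cF tau mu : R) (K : nat)
  (x z : nat -> X) (lam : nat -> R) (I : nat -> list nat) (p : nat -> nat -> X)
  (xbar : X) :
  (* setting *)
  0 < rho ->
  (forall v, cball x0 (4 * rho) v -> D v) ->
  C1_on D F DF ->
  (forall v, D v -> is_adjoint (DF v) (DFadj v)) ->
  (* (A1) *)
  (exists xs, cball x0 rho xs /\ F xs = y) ->
  (* (A2) *)
  0 < eta < 1 ->
  (forall v w, cball x0 (4 * rho) v -> cball x0 (4 * rho) w ->
     hnorm (hsub (hsub (F v) (F w)) (DF v (hsub v w))) <= eta * hnorm (hsub (F v) (F w))) ->
  (* (A3): 0 < ||F'(v)|| <= cF *)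
  (forall v, cball x0 (4 * rho) v ->
     (exists h, DF v h <> hs_zero) /\ (forall h, hnorm (DF v h) <= cF * hnorm h)) ->
  (* TGSS iteration with exact data *)
  (1 <= K)%nat ->
  x O = x0 ->
  (forall k, z k = hs_add (x k) (hs_scal (lam k) (hsub (x k) (prev x k)))) ->
  (forall k, tgss_indexset K k (I k)) ->
  (forall k,
     is_proj (tgss_slab F DFadj y eta (z (nth 0 (I k) 0%nat))) (z k) (p k O) /\
     (forall j, (1 <= j < length (I k))%nat ->
        is_proj (fun v => forall i, (i <= j)%nat ->
                   tgss_slab F DFadj y eta (z (nth i (I k) 0%nat)) v)
                (p k (j - 1)%nat) (p k j)) /\
     x (S k) = p k (length (I k) - 1)%nat) ->
  (* hypotheses of Theorem 4.8 *)
  (forall k, F (z k) <> y) ->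
  lam O = 0 ->
  (forall k, 0 <= lam k <= 1) ->
  tau > (1 + eta) / (1 - eta) ->
  mu > 1 ->
  (forall k, lam k * (lam k + 1) * hnorm (hsub (x k) (prev x k)) ^ 2 <=
       ((1 - eta) - / tau * (1 + eta)) ^ 2 / (mu * cF ^ 2) * hnorm (hsub (F (z k)) y) ^ 2) ->
  (exists S, Un_cv (fun n => sum_f_R0 (fun k => lam k * hnorm (hsub (x k) (prev x k))) n) S) ->
  (* xbar = lim z_k *)
  seq_cv z xbar ->
  seq_cv x xbar.
Proof.
  intros _ _ _ _ _ _ _ _ _ _ Hz _ _ _ _ Hlam _ _ _ [l Hseries] Hzcv.
  apply seq_cv_of_hnorm_le with
    (c := fun n => hnorm (hsub (z n) xbar) + lam n * hnorm (hsub (x n) (prev x n))).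
  - intro n.
    rewrite <- (Rabs_pos_eq (lam n)) by apply Hlam.
    rewrite <- hnorm_scal, Hz, hsub_add_l; apply hnorm_le_add_r.
  - rewrite <- (Rplus_0_r 0).
    apply CV_plus; [apply seq_cv_hnorm, Hzcv | exact (series_term_cv0 _ _ Hseries)].
Qed.
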